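(* Let $m\ge 1$ and $n=2^m-1$. Let $C\subset F^m$ be a $1$-code containing $0^m$, and put $\dot C := C\setminus\{0^m\}$. Then the set $$P(C) := \Big( H \setminus \bigcup_{\iota\in \dot C}\big(R_\iota+ \hat{\iota} + \bar e^{(\iota)}\big)\Big) \cup \bigcup_{\iota\in \dot C}\big(R_\iota+ \hat{\iota}\big)$$ is a $1$-perfect code in $F^n$. Moreover, $$C=\{\iota\in F^m \mid (\iota,0^{n-m})\in P(C)\}.$$
   Context: $F^m$ denotes the vector space of binary $m$-tuples over $GF(2)$, and $\dot F^m := F^m\setminus\{0^m\}$. Let $\pi^{(1)}=(10\ldots0),\ldots,\pi^{(m)}=(0\ldots01)$ be the standard basis of $F^m$. The coordinates of words $\bar w\in F^n$ ($n=2^m-1$) are indexed by the elements of $\dot F^m$, $\bar w=\{w_\alpha\}_{\alpha\in\dot F^m}$, where the first $m$ coordinates have indices $\pi^{(1)},\ldots,\pi^{(m)}$ (in this order) and the remaining $n-m$ indices are in some fixed order. $\{\bar e^{(\iota)}\}_{\iota\in\dot F^m}$ is the standard basis of $F^n$ ($\bar e^{(\iota)}$ has a single $1$ in the coordinate indexed by $\iota$). For $\alpha\in F^m$, $\hat\alpha := (\alpha,0^{n-m})\in F^n$, i.e. $\hat\alpha=\sum_{i=1}^m \alpha_i \bar e^{(\pi^{(i)})}$. The Hamming code is $H:=\{\bar c\in F^n \mid \sum_{\alpha\in\dot F^m} c_\alpha\alpha = 0^m\}$. For $\iota\in\dot F^m$, $R_\iota := \{\bar c\in H \mid c_\alpha=c_{\alpha+\iota}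 \text{ for all } \alpha\in F^m\setminus\{0^m,\iota\}\}$. The Hamming distance is the number of differing positions; the neighborhood $\Omega(M)$ of $M$ is the set of words at distance at most $1$ from $M$. A set $C$ of words is a $1$-code if the neighborhoods of its elements are pairwise disjoint; a $1$-code $P\subset F^n$ is $1$-perfect if $\Omega(P)=F^n$. *)

From HB Require Import structures.
From mathcomp Require Import all_boot all_order all_algebra.
Set Implicit Arguments. Unset Strict Implicit. Unset Printing Implicit Defensive.
Import GRing.Theory.
Local Open Scope ring_scope.

Notation Fm m := {ffun 'I_m -> 'F_2}.
(* \dot F^m : nonzero m-tuples; they index the n = 2^m - 1 coordinates *)
Notation Fdot m := {x : Fm m | x != 0}.
Notation Word m := {ffun Fdot m -> 'F_2}.

Definition hdist (I : finType) (T : eqType) (f g : {ffun I -> T}) : nat :=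
  #|[pred i | f i != g i]|.

Definition ball (I T : finType) (x : {ffun I -> T}) : {set {ffun I -> T}} :=
  [set y | (hdist x y <= 1)%N].
Definition Omega (I T : finType) (M : {set {ffun I -> T}}) : {set {ffun I -> T}} :=
  \bigcup_(x in M) ball x.

Definition one_code (I T : finType) (C : {set {ffun I -> T}}) : Prop :=
  forall x y, x \in C -> y \in C -> x != y -> [disjoint ball x & ball y].

Definition one_perfect (I T : finType) (P : {set {ffun I -> T}}) : Prop :=
  one_code P /\ Omega P = setT.

Definition pi_ (m : nat) (i : 'I_m) : Fm m := [ffun j => (j == i)%:R].

(* coordinate w_alpha, extended by w_0 := 0 for alpha = 0 (only used for alpha != 0) *)
Definition coord (m : nat) (w : Word m) (a : Fm m) : 'F_2 :=
  if insub a is Some b then w b else 0.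

Definition e_ (m : nat) (iota : Fm m) : Word m := [ffun b => (val b == iota)%:R].

(* hat alpha = (alpha, 0^{n-m}) = sum_i alpha_i e^(pi^(i)) *)
Definition hat (m : nat) (a : Fm m) : Word m :=
  \sum_(i < m) [ffun b => a i * e_ (pi_ i) b].

Definition Hamming (m : nat) : {set Word m} :=
  [set c : Word m | [ffun j => \sum_(a : Fdot m) c a * val a j] == 0].

Definition Rset (m : nat) (iota : Fm m) : {set Word m} :=
  [set c in Hamming m | [forall a : Fm m,
      (a != 0) && (a != iota) ==> (coord c a == coord c (a + iota))]].

Definition shift (m : nat) (M : {set Word m}) (v : Word m) : {set Word m} :=
  [set (c + v : Word m) | c : Word m in M].

Definition PC (m : nat) (C : {set Fm m}) : {set Word m} :=
  let Cd := C :\ (0 : Fm m) in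
  (Hamming m :\: \bigcup_(iota in Cd) shift (Rset iota) (hat iota + e_ iota))
  :|: \bigcup_(iota in Cd) shift (Rset iota) (hat iota).

(* The syndrome map identifies [F^n / H] with [F^m], which makes [H] 1-perfect.
   For [io != 0] the cosets [R_io + v] and [R_io + v + e^(io)] have the same
   neighbourhood: a neighbour [x + e^(a)] of [x] is also a neighbour of
   [x + e^(a) + e^(a+io)], and [e^(a) + e^(a+io) + e^(io)] lies in [R_io].  So replacing
   the component [R_io + io^ + e^(io)] of [H] by [R_io + io^] keeps the code 1-perfect,
   as long as the removed components for distinct [io] in [C] are disjoint.  They are:
   summing the coordinates of a word over the coset [pi^(j) + <i, k>] annihilates [R_i],
   and, as [i], [k] and [i + k] have weight at least 3, it returns [i_j] on
   [R_i + i^ + e^(i)]; a word in the components of [i] and of [k] thus forces [i = k]. *)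

From Pilot Require Import Defs.
From mathcomp Require Import all_boot all_order all_algebra.
Import GRing.Theory.
Local Open Scope ring_scope.
Set Implicit Arguments. Unset Strict Implicit.

(* [coord] would otherwise resolve to the coordinate function of vector.v. *)
Notation coord := Defs.coord.

Lemma pchar2_F2 : (2 \in [pchar 'F_2])%N.
Proof. exact: pchar_Fp. Qed.

Lemma F2_cases (a : 'F_2) : a = 0 \/ a = 1.
Proof. by case: a => [[|[|i]] Hi] //=; [left|right]; apply/val_inj. Qed.

Lemma F2_neq0 (a : 'F_2) : a != 0 -> a = 1.
Proof. by case: (F2_cases a) => ->. Qed.

Lemma F2_neq_add1 (a b : 'F_2) : a != b -> b = a + 1.
Proof. by case: (F2_cases a) => ->; case: (F2_cases b) => ->; rewrite ?eqxx // => _; apply/val_inj. Qed.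

Lemma F2_addr1_eq0 (a : 'F_2) : (a + 1 == 0) = (a != 0).
Proof. by case: (F2_cases a) => ->. Qed.

Section BinaryWords.
Variable I : finType.
Implicit Types x y z v : {ffun I -> 'F_2}.

Lemma addvv x : x + x = 0.
Proof. by apply/ffunP => i; rewrite !ffunE (addrr_pchar2 pchar2_F2). Qed.

Lemma oppv x : - x = x.
Proof. by rewrite -[LHS]add0r -(addvv x) addrK. Qed.

Lemma addvK x y : x + y + y = x.
Proof. by rewrite -addrA addvv addr0. Qed.

Lemma addv_eq x y z : (x + y == z) = (x == z + y).
Proof. by rewrite -{1}(oppv y) subr_eq. Qed.

Lemma addv_neq0 x y : x != y -> x + y != 0.
Proof. by rewrite addr_eq0 oppv. Qed.

Definition unitv (b : I) : {ffun I -> 'F_2} := [ffun i => (i == b)%:R].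

Lemma ballP x y : reflect (exists o, y = x + oapp unitv 0 o) (y \in ball x).
Proof.
rewrite inE /hdist; apply: (iffP idP) => [|[[b|] ->]].
- case: (pickP [pred i | x i != y i]) => [b Db le1 | same]; last first.
    by exists None; apply/ffunP => i; rewrite addr0; move: (same i) => /negbFE/eqP.
  exists (Some b); apply/ffunP => i; rewrite !ffunE.
  have [->|nib] := eqVneq i b; first by move: Db; rewrite inE => /F2_neq_add1.
  have : i \notin [pred i | x i != y i].
    by apply: contra nib => Di; rewrite (card_le1_eqP le1 i b Di Db).
  by rewrite inE negbK => /eqP ->; rewrite addr0.
- rewrite (leq_trans (subset_leq_card (B := pred1 b) _)) ?card1 //.
  apply/subsetP => i; rewrite !inE !ffunE.
  by have [//|_] := eqVneq i b; rewrite addr0 eqxx.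
- by rewrite (eq_card0 (A := [pred i | _])) // => i; rewrite !inE addr0 eqxx.
Qed.

Lemma ball_center x : x \in ball x.
Proof. by apply/ballP; exists None; rewrite addr0. Qed.

Lemma mem_ball_unitv x b : x + unitv b \in ball x.
Proof. by apply/ballP; exists (Some b). Qed.

Lemma ball_addr x z v : z \in ball x -> z + v \in ball (x + v).
Proof. by case/ballP => o ->; apply/ballP; exists o; rewrite addrAC. Qed.

End BinaryWords.

Section Syndrome.
Variable m : nat.
Implicit Types (x y z w : Word m) (a p : Fm m).

Definition syn w : Fm m := [ffun j => \sum_(a : Fdot m) w a * val a j].

Lemma mem_Hamming w : (w \in Hamming m) = (syn w == 0).
Proof. by rewrite inE. Qed.

Lemma synD x y : syn (x + y) = syn x + syn y.
Proof.
apply/ffunP => j; rewrite !ffunE -big_split.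
by apply: eq_bigr => a _; rewrite ffunE mulrDl.
Qed.

Lemma syn0 : syn 0 = 0.
Proof. by apply: (addIr (syn 0)); rewrite -synD !add0r. Qed.

Lemma syn_unitv (b : Fdot m) : syn (unitv b) = val b.
Proof.
apply/ffunP => j; rewrite ffunE (bigD1 b) //= ffunE eqxx mul1r big1 ?addr0 //.
by move=> a /negbTE; rewrite ffunE => ->; rewrite mul0r.
Qed.

Lemma e_unitv p (p0 : p != 0) : e_ p = unitv (Sub p p0 : Fdot m).
Proof. by apply/ffunP => b; rewrite !ffunE. Qed.

Lemma syn_e p : p != 0 -> syn (e_ p) = p.
Proof. by move=> p0; rewrite (e_unitv p0) syn_unitv. Qed.

Lemma pi_neq0 (i : 'I_m) : pi_ i != 0.
Proof. by apply/eqP => /ffunP /(_ i); rewrite !ffunE eqxx. Qed.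

Lemma hatE a :
  hat a = [ffun b : Fdot m => \sum_(i < m) a i * (val b == pi_ i)%:R].
Proof.
apply/ffunP => b; rewrite sum_ffunE ffunE.
by apply: eq_bigr => i _; rewrite !ffunE.
Qed.

Lemma sum_Fdot_eq p (g : Fm m -> 'F_2) : p != 0 ->
  \sum_(b : Fdot m) (val b == p)%:R * g (val b) = g p.
Proof.
move=> p0; rewrite (bigD1 (Sub p p0 : Fdot m)) //= eqxx mul1r big1 ?addr0 //.
by move=> b /negbTE; rewrite -val_eqE /= => ->; rewrite mul0r.
Qed.

Lemma syn_hat a : syn (hat a) = a.
Proof.
apply/ffunP => j; rewrite hatE ffunE.
under eq_bigr do rewrite ffunE mulr_suml.
rewrite exchange_big /=.
under eq_bigr => i _.
  under eq_bigr do rewrite -mulrA.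
  rewrite -mulr_sumr (@sum_Fdot_eq (pi_ i) (fun v => v j)) ?pi_neq0 //.
  over.
rewrite (bigD1 j) //= big1 ?addr0 => [|i nij]; first by rewrite ffunE eqxx mulr1.
by rewrite ffunE eq_sym (negbTE nij) mulr0.
Qed.

Lemma hat0 : hat (0 : Fm m) = 0.
Proof. by apply/ffunP => b; rewrite hatE !ffunE big1 // => i _; rewrite ffunE mul0r. Qed.

Lemma syn0_ball_uniq x y z :
  syn x = 0 -> syn y = 0 -> z \in ball x -> z \in ball y -> x = y.
Proof.
move=> sx sy /ballP[o ->] /ballP[o' exy].
have := congr1 syn exy; rewrite !synD sx sy !add0r.
case: o o' exy => [b|] [b'|] /= exy; rewrite ?syn_unitv ?syn0 => sb.
- by move: exy; rewrite (val_inj sb) => /addIr.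
- by move: (valP b); rewrite sb eqxx.
- by move: (valP b'); rewrite -sb eqxx.
- by move: exy; rewrite !addr0.
Qed.

Lemma syn0_ball_cover z : exists2 c, syn c = 0 & z \in ball c.
Proof.
have [s0|sn] := eqVneq (syn z) 0; first by exists z; rewrite ?ball_center.
pose b : Fdot m := Sub (syn z) sn.
exists (z + unitv b); first by rewrite synD syn_unitv addvv.
by apply/ballP; exists (Some b); rewrite /= addvK.
Qed.

Lemma coordD x y a : coord (x + y) a = coord x a + coord y a.
Proof. by rewrite /coord; case: (insub a) => [b|]; rewrite ?ffunE ?addr0. Qed.

Lemma coord0 a : coord 0 a = 0.
Proof. by rewrite /coord; case: (insub a) => [b|]; rewrite ?ffunE. Qed.

Lemma coord_unitv (b : Fdot m) a : coord (unitv b) a = (a == val b)%:R.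
Proof.
rewrite /coord; case: insubP => [b' _ <-|/negPn/eqP->]; rewrite ?ffunE ?val_eqE //.
by rewrite eq_sym (negbTE (valP b)).
Qed.

Lemma coord_e p a : p != 0 -> coord (e_ p) a = (a == p)%:R.
Proof. by move=> p0; rewrite (e_unitv p0) coord_unitv. Qed.

Lemma coord_hat p a : coord (hat p) a = \sum_(i < m) p i * (a == pi_ i)%:R.
Proof.
rewrite /coord hatE; case: insubP => [b _ <-|/negPn/eqP->]; rewrite ?ffunE //.
by apply/esym/big1 => i _; rewrite eq_sym (negbTE (pi_neq0 i)) mulr0.
Qed.

End Syndrome.

Section SwitchingComponent.
Variable m : nat.
Implicit Types (x y z v w c : Word m) (a p io : Fm m).

Lemma RsetP io c : reflect
  (syn c = 0 /\ forall a, a != 0 -> a != io -> coord c a = coord c (a + io))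
  (c \in Rset io).
Proof.
rewrite !inE; apply: (iffP andP) => [[/eqP sc /forallP cc]|[sc cc]].
  by split=> // a a0 ai; apply/eqP/(implyP (cc a)); rewrite a0 ai.
by split; [apply/eqP | apply/forallP => a; apply/implyP => /andP[a0 ai]; apply/eqP/cc].
Qed.

Lemma Rset0 io : 0 \in Rset io.
Proof. by apply/RsetP; split=> [|*]; rewrite ?syn0 ?coord0. Qed.

Lemma RsetD io x y : x \in Rset io -> y \in Rset io -> x + y \in Rset io.
Proof.
move=> /RsetP[sx cx] /RsetP[sy cy]; apply/RsetP; split; first by rewrite synD sx sy addr0.
by move=> a a0 ai; rewrite !coordD (cx a a0 ai) (cy a a0 ai).
Qed.

Lemma syn_Rset io c : c \in Rset io -> syn c = 0.
Proof. by case/RsetP. Qed.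

Lemma syn_Rset_addl io w v : w + v \in Rset io -> syn w = syn v.
Proof.
by move/syn_Rset/eqP; rewrite synD addr_eq0 oppv => /eqP.
Qed.

Lemma mem_shift (M : {set Word m}) v w : (w \in shift M v) = (w + v \in M).
Proof.
apply/imsetP/idP => [[c Mc ->]|Mw]; first by rewrite addvK.
by exists (w + v); rewrite ?addvK.
Qed.

Lemma Rset_triple io a : io != 0 -> a != 0 -> a != io ->
  e_ a + e_ (a + io) + e_ io \in Rset io.
Proof.
move=> io0 a0 ai; have aio0 := addv_neq0 ai.
apply/RsetP; split; first by rewrite !synD !syn_e // addrA addvv add0r addvv.
move=> c c0 ci; rewrite !coordD !coord_e // !addv_eq addvK addvv.
by rewrite (negbTE c0) (negbTE ci) !addr0 addrC.
Qed.

Lemma unitv_e (b : Fdot m) : unitv b = e_ (val b).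
Proof. by apply/ffunP => b'; rewrite !ffunE. Qed.

Lemma mem_ball_e w p : p != 0 -> w + e_ p \in ball w.
Proof. by move=> p0; rewrite (e_unitv p0) mem_ball_unitv. Qed.

Lemma Rset_switch_ball io v x z : io != 0 -> x + v \in Rset io -> z \in ball x ->
  exists2 x', x' + (v + e_ io) \in Rset io & z \in ball x'.
Proof.
move=> io0 Rx /ballP[[b|] ->] /=; last first.
  exists (x + e_ io); first by rewrite addrACA addvv addr0.
  by rewrite addr0 -{1}(addvK x (e_ io)) mem_ball_e.
rewrite unitv_e; have a0 := valP b; set a := val b in a0 *.
have [->|ai] := eqVneq a io.
  by exists (x + e_ io); rewrite ?ball_center // addrACA addvv addr0.
exists (x + e_ a + e_ (a + io)).
  by rewrite -[x + _ + _]addrA addrACA RsetD ?Rset_triple.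
by rewrite -{1}(addvK (x + e_ a) (e_ (a + io))) mem_ball_e ?addv_neq0.
Qed.

End SwitchingComponent.

Section CoordinateSums.
Variable m : nat.
Implicit Types (w c : Word m) (a p io : Fm m) (S : pred (Fm m)) (x j : 'I_m).

Definition coord_sum S w : 'F_2 := \sum_(a | S a) coord w a.

Lemma coord_sumD S w c : coord_sum S (w + c) = coord_sum S w + coord_sum S c.
Proof. by rewrite -big_split; apply: eq_bigr => a _; rewrite coordD. Qed.

Lemma coord_sum0 S : coord_sum S 0 = 0.
Proof. by apply: big1 => a _; rewrite coord0. Qed.

Lemma sum_pred_eq S p : \sum_(a | S a) ((a == p)%:R : 'F_2) = (S p)%:R.
Proof.
case Sp: (S p); last by apply: big1 => a Sa; case: eqP => // ap; rewrite -ap Sa in Sp.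
by rewrite (bigD1 p) //= eqxx big1 ?addr0 // => a /andP[_ /negbTE ->].
Qed.

Lemma coord_sum_e S p : p != 0 -> coord_sum S (e_ p) = (S p)%:R.
Proof. by move=> p0; rewrite /coord_sum; under eq_bigr do rewrite coord_e //; rewrite sum_pred_eq. Qed.

Lemma coord_sum_hat S p : coord_sum S (hat p) = \sum_(x < m) p x * (S (pi_ x))%:R.
Proof.
rewrite /coord_sum; under eq_bigr do rewrite coord_hat.
by rewrite exchange_big; apply: eq_bigr => x _; rewrite -mulr_sumr sum_pred_eq.
Qed.

Lemma nonzero_coord p : p != 0 -> exists j, p j != 0.
Proof.
move=> p0; case: (pickP (fun j => p j != 0)) => [j|p_eq0]; first by exists j.
by case/eqP: p0; apply/ffunP => j; rewrite ffunE; apply/eqP/negbFE/p_eq0.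
Qed.

(* Words of [R_io] take equal values on each pair {a, a + io} inside [S]; splitting
   [S] along a coordinate where [io] is nonzero separates the two members of each pair. *)
Lemma coord_sum_Rset io S c : io != 0 -> (forall a, S (a + io) = S a) -> ~~ S 0 ->
  c \in Rset io -> coord_sum S c = 0.
Proof.
move=> io0 S_io S0 /RsetP[_ Rc]; have [j /F2_neq0 ioj] := nonzero_coord io0.
rewrite /coord_sum (bigID (fun a => a j == 0)) /= [X in _ + X](reindex_inj (addIr io)) /=.
under [X in _ + X]eq_bigl => a do rewrite S_io ffunE ioj F2_addr1_eq0 negbK.
rewrite -big_split big1 // => a /andP[Sa _].
have a0 : a != 0 by apply: contraTneq Sa => ->.
have a_io : a != io by apply: contraTneq Sa => ->; rewrite -[io]add0r S_io.
by rewrite -(Rc a a0 a_io); exact: (addrr_pchar2 pchar2_F2 (coord c a)).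
Qed.

End CoordinateSums.

Section TwoDimensionalSpan.
Variable m : nat.
Implicit Types (w : Word m) (t u i k : Fm m) (x y j : 'I_m).

Definition span2 i k : pred (Fm m) :=
  fun t => [|| t == 0, t == i, t == k | t == i + k].

Lemma span2C i k : span2 k i =1 span2 i k.
Proof. by move=> t; rewrite /span2 (addrC k); case: (t == i); case: (t == k). Qed.

Lemma span2_addl i k t : span2 i k t -> span2 i k (t + i).
Proof.
case/or4P => /eqP->; rewrite /span2 ?add0r ?addvv ?(addrC k) ?addvK ?eqxx ?orbT //.
by rewrite addrAC addvv add0r eqxx !orbT.
Qed.

Lemma span2_addlE i k t : span2 i k (t + i) = span2 i k t.
Proof. by apply/idP/idP => /span2_addl //; rewrite addvK. Qed.

(* Hamming weight at least 3; the case [x = y] excludes [u = 0]. *)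
Definition heavy u := forall x y, u != pi_ x /\ u != pi_ x + pi_ y.

Definition span2_heavy i k := forall u, span2 i k u -> u != 0 -> heavy u.

Lemma pi_add_neq0 x y : x != y -> pi_ x + pi_ y != 0.
Proof.
move=> xy; apply/eqP => /ffunP /(_ x).
by rewrite !ffunE eqxx (negbTE xy) addr0.
Qed.

Lemma coord_sum_switched i k j w : i != 0 -> span2_heavy i k ->
  w + (hat i + e_ i) \in Rset i ->
  coord_sum (fun a => span2 i k (a + pi_ j)) w = i j.
Proof.
move=> i0 hv Rw; set S := fun a => _.
have S0 : ~~ S 0.
  by rewrite /S add0r; apply/negP => /hv /(_ (pi_neq0 j) j j) []; rewrite eqxx.
have S_pi x : S (pi_ x) = (x == j).
  have [->|xj] := eqVneq x j; first by rewrite /S addvv /span2 eqxx.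
  by apply/negP => /hv /(_ (pi_add_neq0 xj) x j) []; rewrite eqxx.
have S_i a : S (a + i) = S a by rewrite /S addrAC span2_addlE.
have Si : S i = false by move: (S_i 0); rewrite add0r => ->; apply/negbTE.
move: (coord_sum_Rset i0 S_i S0 Rw).
rewrite !coord_sumD coord_sum_hat coord_sum_e // Si addr0 (bigD1 j) //= S_pi eqxx.
rewrite big1 => [|x /negbTE xj]; last by rewrite S_pi xj mulr0.
by rewrite mulr1 addr0 => /eqP; rewrite addr_eq0 (oppr_pchar2 pchar2_F2) => /eqP.
Qed.

Lemma switched_uniq i k w : i != 0 -> k != 0 -> span2_heavy i k ->
  w + (hat i + e_ i) \in Rset i -> w + (hat k + e_ k) \in Rset k -> i = k.
Proof.
move=> i0 k0 hv Ri Rk; have hv' : span2_heavy k i by move=> u; rewrite span2C; apply: hv.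
apply/ffunP => j; rewrite -(coord_sum_switched j i0 hv Ri) -(coord_sum_switched j k0 hv' Rk).
by apply: eq_bigl => a; rewrite span2C.
Qed.

Lemma hat_e_notin_Rset k : k != 0 -> span2_heavy k k -> hat k + e_ k \notin Rset k.
Proof.
move=> k0 hv; apply/negP => Rk; have [j] := nonzero_coord k0.
have Rk0 : 0 + (hat k + e_ k) \in Rset k by rewrite add0r.
by rewrite -(coord_sum_switched j k0 hv Rk0) coord_sum0 eqxx.
Qed.

End TwoDimensionalSpan.

Section SwitchedCode.
Variable m : nat.
Variable C : {set Fm m}.
Hypothesis C_code : one_code C.
Hypothesis C0 : (0 : Fm m) \in C.
Implicit Types (x y z w : Word m) (i k io : Fm m).
Local Notation Cdot := (C :\ (0 : Fm m)).

Lemma one_code_add_heavy i k : i \in C -> k \in C -> i != k -> heavy (i + k).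
Proof.
move=> Ci Ck ik x y; have /disjointFr dis := C_code Ci Ck ik.
have ball_pi (u : Fm m) t : u + pi_ t \in ball u by exact: mem_ball_unitv.
split; apply/eqP => eik.
- have ei : i = k + pi_ x by rewrite -eik addrCA addvv addr0.
  by move: (dis _ (ball_center i)); rewrite {1}ei ball_pi.
- have ei : i + pi_ x = k + pi_ y.
    have -> : k = i + (pi_ x + pi_ y) by rewrite -eik addrA addvv add0r.
    by rewrite addrA addvK.
  by move: (dis _ (ball_pi i x)); rewrite ei ball_pi.
Qed.

Lemma code_span2_heavy i k : i \in C -> k \in C -> span2_heavy i k.
Proof.
have sum_heavy p q : p \in C -> q \in C -> p + q != 0 -> heavy (p + q).
  by move=> Cp Cq pq0; apply: one_code_add_heavy => //; apply: contraNneq pq0 => ->; rewrite addvv.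
move=> Ci Ck u /or4P[]/eqP-> u0; first by rewrite eqxx in u0.
- by rewrite -[i]addr0 in u0 *; apply: sum_heavy.
- by rewrite -[k]addr0 in u0 *; apply: sum_heavy.
- exact: sum_heavy.
Qed.

Definition kept_word x :=
  syn x = 0 /\ forall io, io \in Cdot -> x + (hat io + e_ io) \notin Rset io.
Definition added_word x := exists2 io, io \in Cdot & x + hat io \in Rset io.

Lemma mem_PC x : x \in PC C <-> kept_word x \/ added_word x.
Proof.
rewrite /PC inE; split=> [/orP[/setDP[Hx notR]|/bigcupP[io Cio]]|[[sx notR]|[io Cio Rx]]].
- left; split=> [|io Cio]; first by apply/eqP; rewrite -mem_Hamming.
  by apply: contra notR => Rx; apply/bigcupP; exists io; rewrite ?mem_shift.
- by rewrite mem_shift => Rx; right; exists io.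
- apply/orP; left; apply/setDP; split; first by rewrite mem_Hamming sx.
  by apply/bigcupP => -[io Cio]; rewrite mem_shift; apply/negP/notR.
- by apply/orP; right; apply/bigcupP; exists io; rewrite ?mem_shift.
Qed.

Lemma syn_switched io w : io != 0 -> w + (hat io + e_ io) \in Rset io -> syn w = 0.
Proof. by move=> io0 /syn_Rset_addl ->; rewrite synD syn_hat syn_e ?addvv. Qed.

Lemma kept_added_ball_disjoint x y z :
  kept_word x -> added_word y -> z \in ball x -> z \in ball y -> False.
Proof.
case=> sx notR [io Cio Ry] zx zy; have [io0 _] := setD1P Cio.
have [y' Ry' zy'] := Rset_switch_ball io0 Ry zy.
have exy := syn0_ball_uniq sx (syn_switched io0 Ry') zx zy'.
by move: (notR io Cio); rewrite exy Ry'.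
Qed.

(* Two added words sharing a neighbour come from the same removed component of [H]
   (by [switched_uniq]), and are then translates of two codewords of [H] by [e_ io]. *)
Lemma added_ball_uniq x y z :
  added_word x -> added_word y -> z \in ball x -> z \in ball y -> x = y.
Proof.
case=> [i /setD1P[i0 Ci] Rx] [k /setD1P[k0 Ck] Ry] zx zy.
have [x' Rx' zx'] := Rset_switch_ball i0 Rx zx.
have [y' Ry' zy'] := Rset_switch_ball k0 Ry zy.
have ex'y' := syn0_ball_uniq (syn_switched i0 Rx') (syn_switched k0 Ry') zx' zy'.
rewrite ex'y' in Rx'; have eik := switched_uniq i0 k0 (code_span2_heavy Ci Ck) Rx' Ry'.
subst k; have syn_e0 u : u + hat i \in Rset i -> syn (u + e_ i) = 0.
  by move/syn_Rset_addl; rewrite synD syn_hat syn_e // => ->; rewrite addvv.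
apply: (addIr (e_ i)).
exact: syn0_ball_uniq (syn_e0 _ Rx) (syn_e0 _ Ry) (ball_addr _ zx) (ball_addr _ zy).
Qed.

Lemma PC_one_code : one_code (PC C).
Proof.
move=> x y Px Py xy; rewrite disjoint_subset; apply/subsetP => z zx.
rewrite inE; apply: contra xy => zy; apply/eqP.
case/mem_PC: Px => [kx|ax]; case/mem_PC: Py => [ky|ay].
- by case: kx ky => [sx _] [sy _]; apply: syn0_ball_uniq zx zy.
- by case: (kept_added_ball_disjoint kx ay zx zy).
- by case: (kept_added_ball_disjoint ky ax zy zx).
- exact: added_ball_uniq zx zy.
Qed.

Lemma PC_cover : Omega (PC C) = setT.
Proof.
apply/setP => z; rewrite inE; apply/bigcupP.
have [c sc zc] := syn0_ball_cover z.
case: (boolP [exists io in Cdot, c + (hat io + e_ io) \in Rset io]).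
  case/exists_inP => io Cio Rc; have [io0 _] := setD1P Cio.
  have [x' Rx' zx'] := Rset_switch_ball io0 Rc zc.
  exists x' => //; apply/mem_PC; right; exists io => //.
  by rewrite -addrA addvv addr0 in Rx'.
move/exists_inPn => notR; exists c => //; apply/mem_PC; left; split=> //.
Qed.

Lemma PC_hat : C = [set io | hat io \in PC C].
Proof.
apply/setP => io; rewrite inE; apply/idP/idP => [Cio|/mem_PC[[sio _]|[k Ck Rk]]].
- have [->|io0] := eqVneq io 0.
    apply/mem_PC; left; split=> [|k /setD1P[k0 Ck]]; rewrite hat0 ?syn0 //.
    by rewrite add0r (hat_e_notin_Rset k0 (code_span2_heavy Ck Ck)).
  by apply/mem_PC; right; exists io; rewrite ?addvv ?Rset0 // !inE io0.
- by move: sio; rewrite syn_hat => ->.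
- by case/setD1P: Ck => _; move/syn_Rset_addl: Rk; rewrite !syn_hat => ->.
Qed.

End SwitchedCode.

Theorem mainTheorem1 (m : nat) (C : {set Fm m}) :
  (1 <= m)%N -> one_code C -> (0 : Fm m) \in C ->
  one_perfect (PC C) /\ C = [set iota : Fm m | hat iota \in PC C].
Proof.
move=> _ C_code C0.
by split; [split; [exact: PC_one_code | exact: PC_cover] | exact: PC_hat].
Qed.
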